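(* Let $n\ge2$ and $q\ge1$ be integers and $\beta>0$, $J>0$, $H\in\mathbb{R}$. For $\pi\in S_3$ let $\mathrm{CDdes}(\pi)=\mathrm{des}(\pi)+\mathrm{des}(\pi^{-1})$, where $\mathrm{des}(\pi)$ is the number of $i\in\{1,2\}$ with $\pi(i)>\pi(i+1)$, and put $\phi(\alpha,\sigma)=1-\tfrac12\mathrm{CDdes}(\alpha^{-1}\sigma)$. For $\vec\pi=(\pi^{(1)},\ldots,\pi^{(n)})\in S_3^n$ define the mean-field Hamiltonian $$\mathcal{H}^{(mean)}(\vec\pi)=-\frac{qJ}{n-1}\sum_{1\le i<j\le n}\phi(\pi^{(i)},\pi^{(j)})-H\sum_{i=1}^n\phi(\pi^{(i)},\mathrm{id}),$$ and $Z_n(\beta)=\sum_{\vec\pi\in S_3^n}\exp(-\beta\mathcal{H}^{(mean)}(\vec\pi))$. Then $$Z_n(\beta)=e^{-\frac{\beta}{2}\left(\frac{nqJ}{n-1}+\frac{H^2(n-1)}{qJ}\right)}\sum_{a+b+c=n}\binom{n}{a,b,c}\,G_a\!\left(\tfrac{H(n-1)}{qJ};e^{\frac{\beta qJ}{2(n-1)}}\right)G_b\!\left(0;e^{\frac{\beta qJ}{2(n-1)}}\right)G_c\!\left(0;e^{\frac{\beta qJ}{2(n-1)}}\right),$$ where the sum is over nonnegative integers $a,b,c$ and $$G_m(\ell;x):=\sum_{i+j=m}\binom{m}{i}x^{(i-j+\ell)^2}=\sum_{i=0}^{m}\binom{m}{i}x^{(2i-m+\ell)^2}.$$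
   Context: Permutations of $\{1,2,3\}$ are composed as functions, $(\alpha^{-1}\sigma)(x)=\alpha^{-1}(\sigma(x))$; $\mathrm{id}=123$. $\binom{n}{a,b,c}$ denotes the multinomial coefficient. *)

From HB Require Import structures.
From mathcomp Require Import all_boot all_order all_algebra all_fingroup.
From mathcomp Require Import all_classical all_reals all_analysis.
Set Implicit Arguments. Unset Strict Implicit. Unset Printing Implicit Defensive.
Import Order.TTheory GRing.Theory Num.Theory.
Local Open Scope ring_scope.

(* des(pi) = #{ i in {1,2} : pi(i) > pi(i+1) }; positions 1,2,3 are ordinals 0,1,2 *)
Definition des (p : 'S_3) : nat :=
  #|[set i : 'I_2 | (p (widen_ord (leqnSn 2) i) > p (lift ord0 i))%N]|.

Definition CDdes (p : 'S_3) : nat := (des p + des (p^-1)%g)%N.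

(* In mathcomp, (s * t) x = t (s x) (lemma permM), so the function
   x |-> alpha^-1 (sigma x) is the permutation (sigma * alpha^-1)%g. *)
Definition compinv (alpha sigma : 'S_3) : 'S_3 := (sigma * alpha^-1)%g.

Definition phi {R : realType} (alpha sigma : 'S_3) : R :=
  1 - (CDdes (compinv alpha sigma))%:R / 2.

Definition Hmean {R : realType} (n q : nat) (J H : R)
    (p : {ffun 'I_n -> 'S_3}) : R :=
  - ((q%:R * J) / (n%:R - 1)) *
      (\sum_(i < n) \sum_(j < n | (i < j)%N) phi (p i) (p j))
  - H * (\sum_(i < n) phi (p i) 1%g).

Definition Zn {R : realType} (n q : nat) (J H beta : R) : R :=
  \sum_(p : {ffun 'I_n -> 'S_3}) expR (- beta * Hmean q J H p).

Definition G {R : realType} (m : nat) (l x : R) : R :=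
  \sum_(i < m.+1) ('C(m, i))%:R * powR x ((i%:R - (m - i)%:R + l) ^+ 2).

Definition multinom (n a b c : nat) : nat := (n`! %/ (a`! * b`! * c`!))%N.

From HB Require Import structures.
From mathcomp Require Import all_boot all_order all_algebra all_fingroup.
From mathcomp Require Import all_classical all_reals all_analysis.
From mathcomp Require Import zify ring lra.
Import Order.TTheory GRing.Theory Num.Theory.
Local Open Scope ring_scope.

(* Let s(σ) ∈ {±e_1, ±e_2, ±e_3} be the signed unit vector whose axis is the
   middle value σ(2) and whose sign is that of σ(3) - σ(1).  Checking the 36
   pairs gives φ(α,σ) = <s(α), s(σ)>, and s(id) = e_2.  With the magnetisation
   M = Σ_i s(π^(i)) the Hamiltonian is therefore
   -qJ (|M|^2 - n) / (2(n-1)) - H M_2, and completing the square in M_2 turns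
   exp(-β H) into a constant times a Gaussian in M.  The partition function is
   then a linear functional of the n-th power of the generating polynomial
   Σ_σ x^(s(σ)+1) = x_1 x_3 (1 + x_2^2) + x_2 x_3 (1 + x_1^2) + x_1 x_2 (1 + x_3^2):
   the trinomial theorem yields the multinomial sum, and the binomial expansion
   of each factor yields the G's. *)

Definition i0 : 'I_3 := ord0.
Definition i1 : 'I_3 := Ordinal (isT : (1 < 3)%N).
Definition i2 : 'I_3 := Ordinal (isT : (2 < 3)%N).

Lemma sum_ord3 (V : nmodType) (F : 'I_3 -> V) : \sum_k F k = F i0 + F i1 + F i2.
Proof. by rewrite !big_ord_recl big_ord0 addr0 addrA; congr (_ + F _ + F _); apply: val_inj. Qed.

Lemma ord3P (x : 'I_3) : [\/ x = i0, x = i1 | x = i2].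
Proof.
by case: x => [[|[|[|//]]] ?]; [constructor 1|constructor 2|constructor 3]; apply: val_inj.
Qed.

Lemma exprD3n (R : comPzSemiRingType) (x y z : R) n :
  (x + y + z) ^+ n =
  \sum_(a < n.+1) \sum_(b < n.+1) \sum_(c < n.+1 | (a + b + c == n)%N)
    x ^+ a * y ^+ b * z ^+ c *+ multinom n a b c.
Proof.
rewrite -addrA addrC exprDn; apply: eq_bigr => a _; have le_a_n := leq_ord a.
rewrite addrC exprDn mulr_suml -sumrMnl.
rewrite (big_ord_widen n.+1
  (fun b => z ^+ (n - a - b) * y ^+ b *+ 'C(n - a, b) * x ^+ a *+ 'C(n, a))
  (leq_subr a n : (n - a).+1 <= n.+1)%N) [LHS]big_mkcond.
apply: eq_bigr => b _; rewrite ltnS; case: ifP => le_b; last first.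
  by rewrite big_pred0 // => c; apply/negbTE/eqP; move/negbT: le_b; lia.
rewrite (big_pred1 (inord (n - a - b))) => [|c]; last first.
  by rewrite /= -val_eqE /= inordK; apply/eqP/eqP; lia.
rewrite inordK; last lia.
rewrite /multinom -(bin_fact le_a_n) -(bin_fact le_b).
rewrite (_ : (_ * _)%N = 'C(n, a) * 'C(n - a, b) * (a`! * b`! * (n - a - b)`!))%N; last by ring.
rewrite mulnK ?muln_gt0 ?fact_gt0 // mulnC mulrnA mulrnAl.
congr (_ *+ _ *+ _).
by rewrite mulrC [z ^+ _ * _]mulrC mulrA.
Qed.

Lemma sum_sym_pairs (V : nmodType) n (F : 'I_n -> 'I_n -> V) :
  (forall i j, F i j = F j i) ->
  \sum_(i < n) \sum_(j < n) F i j =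
  \sum_(i < n) F i i + (\sum_(i < n) \sum_(j < n | (i < j)%N) F i j) *+ 2.
Proof.
move=> FC.
have split_row i : \sum_(j < n) F i j =
    \sum_(j < n | (i < j)%N) F i j + F i i + \sum_(j < n | (j < i)%N) F i j.
  rewrite (bigID (fun j : 'I_n => (i < j)%N)) /= -addrA; congr (_ + _).
  rewrite (bigD1 i) ?ltnn //=; congr (_ + _); apply: eq_bigl => j.
  by rewrite -leqNgt ltn_neqAle andbC.
have lower_upper : \sum_(i < n) \sum_(j < n | (j < i)%N) F i j =
                   \sum_(i < n) \sum_(j < n | (i < j)%N) F i j.
  by rewrite (exchange_big_dep xpredT) //=; apply: eq_bigr => i _; apply: eq_bigr.
under eq_bigr do rewrite split_row.
by rewrite !big_split /= lower_upper mulr2n addrAC addrC addrA.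
Qed.

Definition enc3 (B x y z : nat) : nat := (x + B * (y + B * z))%N.

Lemma enc3D B x y z x' y' z' :
  enc3 B (x + x') (y + y') (z + z') = (enc3 B x y z + enc3 B x' y' z')%N.
Proof. rewrite /enc3; ring. Qed.

Lemma enc3K B x y z : (x < B)%N -> (y < B)%N ->
  [/\ enc3 B x y z %% B = x, enc3 B x y z %/ B %% B = y & enc3 B x y z %/ B %/ B = z]%N.
Proof.
move=> ltxB ltyB; have B_gt0 : (0 < B)%N by apply: leq_ltn_trans ltxB.
rewrite /enc3 !(addnC x) !(mulnC B) modnMDl modn_small // divnMDl // divn_small //.
by rewrite addn0 addnC modnMDl modn_small // divnMDl // divn_small ?addn0.
Qed.

Section CoefWeight.

Variables (R : nzRingType) (B : nat) (w : nat -> nat -> nat -> R).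

(* Reading exponents in base B, ['X^(enc3 B x y z)] stands for the trivariate
   monomial x_1^x x_2^y x_3^z, and [coef_weight] is the linear functional
   sending it to [w x y z]. *)
Definition coef_weight (P : {poly R}) : R :=
  \sum_(m < B * (B * B)) P`_m * w (m %% B) (m %/ B %% B) (m %/ B %/ B).

Lemma coef_weight_sum I (r : seq I) (Pr : pred I) (F : I -> {poly R}) :
  coef_weight (\sum_(i <- r | Pr i) F i) = \sum_(i <- r | Pr i) coef_weight (F i).
Proof.
rewrite /coef_weight exchange_big /=; apply: eq_bigr => m _.
by rewrite coef_sum mulr_suml.
Qed.

Lemma coef_weightMn (P : {poly R}) k : coef_weight (P *+ k) = coef_weight P *+ k.
Proof. by rewrite /coef_weight -sumrMnl; apply: eq_bigr => m _; rewrite coefMn mulrnAl. Qed.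

Lemma coef_weightXn x y z : (x < B)%N -> (y < B)%N -> (z < B)%N ->
  coef_weight 'X^(enc3 B x y z) = w x y z.
Proof.
move=> ltxB ltyB ltzB; have lt_enc : (enc3 B x y z < B * (B * B))%N by rewrite /enc3; nia.
rewrite /coef_weight (bigD1 (Ordinal lt_enc)) //= coefXn eqxx mul1r big1 ?addr0.
  by have [-> -> ->] := enc3K B x y z ltxB ltyB.
by move=> m; rewrite -val_eqE /= => /negbTE m_neq; rewrite coefXn m_neq mul0r.
Qed.

End CoefWeight.

Arguments coef_weight {R}.

Lemma sum_ffun_coef_weight (R : comNzRingType) (T : finType) (e : T -> 'I_3 -> nat)
    (n d B : nat) (w : nat -> nat -> nat -> R) :
  (forall t k, e t k <= d)%N -> (d * n < B)%N ->
  \sum_(p : {ffun 'I_n -> T}) w (\sum_i e (p i) i0) (\sum_i e (p i) i1) (\sum_i e (p i) i2) =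
  coef_weight B w ((\sum_t 'X^(enc3 B (e t i0) (e t i1) (e t i2))) ^+ n).
Proof.
move=> le_e_d lt_dn_B.
have lt_sum (p : {ffun 'I_n -> T}) k : (\sum_i e (p i) k < B)%N.
  apply: leq_ltn_trans lt_dn_B; rewrite mulnC -[X in (X * d)%N](card_ord n) -sum_nat_const.
  by apply: leq_sum => i _; apply: le_e_d.
rewrite -[n in _ ^+ n]card_ord -prodr_const bigA_distr_bigA /= coef_weight_sum.
apply: eq_bigr => p _; rewrite prodrXr.
have -> : (\sum_i enc3 B (e (p i) i0) (e (p i) i1) (e (p i) i2) =
    enc3 B (\sum_i e (p i) i0) (\sum_i e (p i) i1) (\sum_i e (p i) i2))%N.
  by rewrite /enc3 !big_split /= -!big_distrr /= big_split /= -big_distrr.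
by rewrite coef_weightXn.
Qed.

Variant perm3_spec : 'I_3 -> 'I_3 -> 'I_3 -> Prop :=
  | Perm123 : perm3_spec i0 i1 i2
  | Perm132 : perm3_spec i0 i2 i1
  | Perm213 : perm3_spec i1 i0 i2
  | Perm231 : perm3_spec i1 i2 i0
  | Perm312 : perm3_spec i2 i0 i1
  | Perm321 : perm3_spec i2 i1 i0.

Lemma perm3P (t : 'S_3) : perm3_spec (t i0) (t i1) (t i2).
Proof.
have : [&& t i0 != t i1, t i0 != t i2 & t i1 != t i2] by rewrite !(inj_eq perm_inj).
by case: (ord3P (t i0)) => ->; case: (ord3P (t i1)) => ->;
  case: (ord3P (t i2)) => -> //; constructor.
Qed.

Lemma perm3_eq (s t : 'S_3) : s i0 = t i0 -> s i1 = t i1 -> s i2 = t i2 -> s = t.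
Proof. by move=> e0 e1 e2; apply/permP => x; case: (ord3P x) => ->. Qed.

Lemma permV3 (t : 'S_3) y :
  (t^-1)%g y = if t i0 == y then i0 else if t i1 == y then i1 else i2.
Proof.
rewrite -{2 3}(permKV t y) !(inj_eq perm_inj).
by case: (ord3P ((t^-1)%g y)) => ->.
Qed.

Lemma desE (t : 'S_3) : des t = ((t i1 < t i0)%N + (t i2 < t i1)%N)%N.
Proof.
rewrite /des -sum1_card big_mkcond /= !big_ord_recl big_ord0 !inE.
have -> : widen_ord (leqnSn 2) ord0 = i0 by apply: val_inj.
have -> : lift ord0 (ord0 : 'I_2) = i1 by apply: val_inj.
have -> : widen_ord (leqnSn 2) (lift ord0 (ord0 : 'I_1)) = i1 by apply: val_inj.
have -> : lift ord0 (lift ord0 (ord0 : 'I_1)) = i2 by apply: val_inj.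
by case: (_ < _)%N; case: (_ < _)%N.
Qed.

(* σ is encoded by its axis σ(2) and direction [σ(1) < σ(3)]; [level σ] is
   s(σ) + (1, 1, 1), a point of {0, 1, 2}^3. *)
Definition axis_level (k : 'I_3) (up : bool) (j : 'I_3) : nat :=
  if k == j then (if up then 2 else 0)%N else 1%N.

Definition level (t : 'S_3) : 'I_3 -> nat := axis_level (t i1) (t i0 < t i2)%N.

Definition spin (t : 'S_3) (k : 'I_3) : int := (level t k)%:Z - 1.

Lemma level_le2 (t : 'S_3) k : (level t k <= 2)%N.
Proof. by rewrite /level /axis_level; case: ifP => _ //; case: ifP. Qed.

Lemma CDdes_compinv (a s : 'S_3) :
  (CDdes (compinv a s))%:Z = 2 - 2 * \sum_k spin a k * spin s k.
Proof.
rewrite /CDdes !desE /compinv invMg invgK !permM !permV3 sum_ord3 /spin /level /axis_level.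
by case: (perm3P a); case: (perm3P s).
Qed.

Lemma perm3_axis_bij : bijective (fun t : 'S_3 => (t i1, (t i0 < t i2)%N)).
Proof.
apply: inj_card_bij; last by rewrite card_Sn card_prod card_ord card_bool.
move=> s t /eqP; rewrite xpair_eqE => /andP[eq1 eq02].
suff /and3P[/eqP e0 /eqP e1 /eqP e2] : [&& s i0 == t i0, s i1 == t i1 & s i2 == t i2].
  exact: perm3_eq.
by move: eq1 eq02; case: (perm3P s); case: (perm3P t).
Qed.

Lemma sum_perm3_axis (V : nmodType) (F : 'I_3 -> bool -> V) :
  \sum_(t : 'S_3) F (t i1) (t i0 < t i2)%N = \sum_k \sum_(up : bool) F k up.
Proof.
by rewrite pair_big (reindex _ (onW_bij _ perm3_axis_bij)).
Qed.

Lemma phi_spin (R : realType) (a s : 'S_3) :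
  phi a s = \sum_k (spin a k)%:~R * (spin s k)%:~R :> R.
Proof.
rewrite /phi [(CDdes _)%:R]pmulrn CDdes_compinv rmorphB rmorphM rmorph_sum /=.
under eq_bigr do rewrite rmorphM.
set S := \sum_k _; rewrite -pmulrn; lra.
Qed.

Lemma phiC (R : realType) (a s : 'S_3) : phi a s = phi s a :> R.
Proof. by rewrite !phi_spin; apply: eq_bigr => k _; rewrite mulrC. Qed.

Lemma phixx (R : realType) (a : 'S_3) : phi a a = 1 :> R.
Proof. by rewrite /phi /compinv mulgV /CDdes invg1 !desE !perm1 /= mul0r subr0. Qed.

Lemma spin1 (k : 'I_3) : spin 1 k = (k == i1)%:Z.
Proof. by rewrite /spin /level /axis_level !perm1; case: (ord3P k) => ->. Qed.

Lemma phi1 (R : realType) (a : 'S_3) : phi a 1%g = (spin a i1)%:~R :> R.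
Proof.
rewrite phi_spin (bigD1 i1) //= spin1 eqxx mulr1 big1 ?addr0 // => k /negbTE k_neq.
by rewrite spin1 k_neq mulr0.
Qed.

Definition mag {R : nzRingType} {n} (p : {ffun 'I_n -> 'S_3}) (k : 'I_3) : R :=
  \sum_i (spin (p i) k)%:~R.

Lemma mag_level (R : nzRingType) n (p : {ffun 'I_n -> 'S_3}) k :
  mag p k = (\sum_i level (p i) k)%:R - n%:R :> R.
Proof.
rewrite /mag natr_sum -[n in n%:R]card_ord -sumr_const -sumrB.
by apply: eq_bigr => i _; rewrite /spin rmorphB /= -pmulrn.
Qed.

Lemma sum_pairs_phi (R : realType) n (p : {ffun 'I_n -> 'S_3}) :
  \sum_(i < n) \sum_(j < n | (i < j)%N) phi (p i) (p j) =
  (\sum_k mag p k ^+ 2 - n%:R) / 2 :> R.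
Proof.
have sum_phi : \sum_i \sum_j phi (p i) (p j) = \sum_k mag p k ^+ 2 :> R.
  under [RHS]eq_bigr do rewrite expr2 /mag mulr_suml.
  under [RHS]eq_bigr do under eq_bigr do rewrite mulr_sumr.
  rewrite [RHS]exchange_big /=; apply: eq_bigr => i _.
  by rewrite [RHS]exchange_big /=; apply: eq_bigr => j _; rewrite phi_spin.
have sum_diag : \sum_i phi (p i) (p i) = n%:R :> R.
  by under eq_bigr do rewrite phixx; rewrite sumr_const card_ord.
have := @sum_sym_pairs R n (fun i j => phi (p i) (p j)) (fun i j => phiC _ _ _).
rewrite sum_phi sum_diag => ->; lra.
Qed.

Lemma Hmean_mag (R : realType) n q (J H : R) (p : {ffun 'I_n -> 'S_3}) :
  Hmean q J H p =
  - (q%:R * J / (n%:R - 1)) * ((\sum_k mag p k ^+ 2 - n%:R) / 2) - H * mag p i1.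
Proof. by rewrite /Hmean sum_pairs_phi; congr (_ - H * _); apply: eq_bigr => i _; rewrite phi1. Qed.

Definition gauss_weight {R : realType} (n : nat) (K l : R) (x y z : nat) : R :=
  expR (K * ((x%:R - n%:R) ^+ 2 + (y%:R - n%:R + l) ^+ 2 + (z%:R - n%:R) ^+ 2)).

Lemma Boltzmann_weight (R : realType) n q (beta J H : R) (p : {ffun 'I_n -> 'S_3}) :
  (2 <= n)%N -> (1 <= q)%N -> 0 < J ->
  expR (- beta * Hmean q J H p) =
  expR (- (beta / 2) * ((n%:R * q%:R * J) / (n%:R - 1) + (H ^+ 2 * (n%:R - 1)) / (q%:R * J))) *
  gauss_weight n ((beta * q%:R * J) / (2 * (n%:R - 1))) ((H * (n%:R - 1)) / (q%:R * J))
    (\sum_i level (p i) i0) (\sum_i level (p i) i1) (\sum_i level (p i) i2).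
Proof.
move=> n_ge2 q_ge1 J_gt0.
have n1_neq0 : n%:R - 1 != 0 :> R by rewrite subr_eq0 pnatr_eq1; lia.
rewrite /gauss_weight -expRD -!(mag_level R) Hmean_mag sum_ord3; congr expR.
by field; rewrite gt_eqF // pnatr_eq0 -lt0n q_ge1 n1_neq0.
Qed.

Definition axis_poly {R : nzRingType} (B : nat) (k : 'I_3) : {poly R} :=
  \sum_(up : bool) 'X^(enc3 B (axis_level k up i0) (axis_level k up i1) (axis_level k up i2)).

Lemma sum_Xn_level (R : nzRingType) B :
  \sum_(t : 'S_3) 'X^(enc3 B (level t i0) (level t i1) (level t i2)) =
  axis_poly B i1 + axis_poly B i0 + axis_poly B i2 :> {poly R}.
Proof.
rewrite (@sum_perm3_axis _ (fun k up =>
  'X^(enc3 B (axis_level k up i0) (axis_level k up i1) (axis_level k up i2)))).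
by rewrite sum_ord3 [_ + axis_poly B i1]addrC.
Qed.

Definition axis_exp (k : 'I_3) (m i : nat) (j : 'I_3) : nat := if k == j then (2 * i)%N else m.

Lemma axis_polyXn (R : comNzRingType) B k m :
  axis_poly B k ^+ m = \sum_(i < m.+1)
    'X^(enc3 B (axis_exp k m i i0) (axis_exp k m i i1) (axis_exp k m i i2)) *+ 'C(m, i)
  :> {poly R}.
Proof.
rewrite /axis_poly big_bool /= addrC exprDn; apply: eq_bigr => i _.
rewrite -!exprM -exprD; congr ('X^_ *+ _); have := leq_ord i.
by rewrite /enc3 /axis_exp /axis_level; case: (ord3P k) => -> /=; nia.
Qed.

Lemma coef_weight_axes (R : comNzRingType) B (w : nat -> nat -> nat -> R) a b c :
  (2 * (a + b + c) < B)%N ->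
  coef_weight B w (axis_poly B i1 ^+ a * axis_poly B i0 ^+ b * axis_poly B i2 ^+ c) =
  \sum_(i < a.+1) \sum_(j < b.+1) \sum_(k < c.+1)
    w (a + 2 * j + c)%N (2 * i + b + c)%N (a + b + 2 * k)%N *+ ('C(a, i) * 'C(b, j) * 'C(c, k)).
Proof.
move=> lt_B; rewrite !axis_polyXn.
rewrite -mulrA mulr_suml coef_weight_sum; apply: eq_bigr => i _.
rewrite mulr_suml mulr_sumr coef_weight_sum; apply: eq_bigr => j _.
rewrite !mulr_sumr coef_weight_sum; apply: eq_bigr => k _.
rewrite !mulrnAl !mulrnAr -!mulrnA -!exprD -!enc3D coef_weightMn /axis_exp /=.
have := leq_ord i; have := leq_ord j; have := leq_ord k => le_k le_j le_i.
rewrite coef_weightXn; try lia.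
by congr (w _ _ _ *+ _); ring.
Qed.

Lemma G_expR (R : realType) m (l K : R) :
  G m l (expR K) = \sum_(i < m.+1) 'C(m, i)%:R * expR (K * ((2 * i)%:R - m%:R + l) ^+ 2).
Proof.
apply: eq_bigr => i _; rewrite -expRM (natrB _ (leq_ord i : (i <= m)%N)) natrM.
have -> : 2 * i%:R - m%:R = i%:R - (m%:R - i%:R) :> R by ring.
by rewrite mulrC.
Qed.

Lemma sum_gauss_weight_axes (R : realType) n (K l : R) a b c : (a + b + c)%N = n ->
  \sum_(i < a.+1) \sum_(j < b.+1) \sum_(k < c.+1)
    gauss_weight n K l (a + 2 * j + c) (2 * i + b + c) (a + b + 2 * k)
      *+ ('C(a, i) * 'C(b, j) * 'C(c, k))
  = G a l (expR K) * G b 0 (expR K) * G c 0 (expR K).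
Proof.
move=> <-; rewrite !G_expR -mulrA mulr_suml; apply: eq_bigr => i _.
rewrite mulr_suml mulr_sumr; apply: eq_bigr => j _.
rewrite !mulr_sumr; apply: eq_bigr => k _.
have -> : gauss_weight (a + b + c) K l (a + 2 * j + c) (2 * i + b + c) (a + b + 2 * k) =
    expR (K * ((2 * i)%:R - a%:R + l) ^+ 2) * expR (K * ((2 * j)%:R - b%:R + 0) ^+ 2)
    * expR (K * ((2 * k)%:R - c%:R + 0) ^+ 2).
  by rewrite /gauss_weight -!expRD !natrD; congr expR; ring.
by rewrite -mulr_natl !natrM; ring.
Qed.

Theorem theorem8 (R : realType) (n q : nat) (beta J H : R) :
  (2 <= n)%N -> (1 <= q)%N -> 0 < beta -> 0 < J ->
  Zn n q J H beta =
    expR (- (beta / 2) * ((n%:R * q%:R * J) / (n%:R - 1)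
                          + (H ^+ 2 * (n%:R - 1)) / (q%:R * J))) *
    \sum_(a < n.+1) \sum_(b < n.+1) \sum_(c < n.+1 | (a + b + c == n)%N)
      (multinom n a b c)%:R *
      G a ((H * (n%:R - 1)) / (q%:R * J)) (expR ((beta * q%:R * J) / (2 * (n%:R - 1)))) *
      G b 0 (expR ((beta * q%:R * J) / (2 * (n%:R - 1)))) *
      G c 0 (expR ((beta * q%:R * J) / (2 * (n%:R - 1)))).
Proof.
move=> n_ge2 q_ge1 _ J_gt0.
rewrite /Zn (eq_bigr _ (fun p _ => Boltzmann_weight R n q beta J H p n_ge2 q_ge1 J_gt0)).
rewrite -mulr_sumr; congr (_ * _).
set K := (beta * q%:R * J) / (2 * (n%:R - 1)); set l := (H * (n%:R - 1)) / (q%:R * J).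
rewrite (sum_ffun_coef_weight R _ level n 2 (2 * n).+1 _ level_le2 (ltnSn _)).
rewrite sum_Xn_level exprD3n !coef_weight_sum; apply: eq_bigr => a _.
rewrite coef_weight_sum; apply: eq_bigr => b _.
rewrite coef_weight_sum; apply: eq_bigr => c /eqP abc.
by rewrite coef_weightMn coef_weight_axes ?abc ?sum_gauss_weight_axes // mulr_natl !mulrnAl.
Qed.
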